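(* Let $\mathfrak g$ be of type $A_n$. For $s\ge1$, $$\mathbf A_s=\bigl\{\{\alpha_{i_k,j_k}\}_{1\le k\le s}:\ i_k,j_k\in I,\ i_1<i_2<\dots<i_s\le j_1<j_2<\dots<j_s\bigr\}.$$ In particular $\#\mathbf A_s=\binom{n}{2s}+\binom{n}{2s-1}$ for $s\ge1$, and $\sum_{s\ge0}\#\mathbf A_s=2^n$.
   Context: Simple roots $\alpha_1,\dots,\alpha_n$ of $A_n$ numbered as in Bourbaki, $I=\{1,\dots,n\}$; for $i\le j$, $\alpha_{i,j}=\alpha_i+\alpha_{i+1}+\dots+\alpha_j$, so $R^+=\{\alpha_{i,j}:i\le j\}$ and $\theta=\alpha_{1,n}$. Partial order: $\lambda\le\mu$ iff $\mu-\lambda$ is a $\mathbb Z_{\ge0}$-combination of simple roots. An antichain is a subset of $R^+$ of pairwise incomparable elements; $\Phi(A)=\{\alpha\in R^+:\alpha\ge\beta$ for some $\beta\in A\}$; $A$ is abelian if $\beta_1+\beta_2\notin R$ for all $\beta_1,\beta_2\in\Phi(A)$. $\mathbf A_s$ is the set of abelian antichains with $s$ elements, and $\mathbf A_0$ consists of the empty antichain only. Convention: $\binom{m}{k}=0$ if $k>m$. *)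

(* Root system of type A_n, simple roots indexed 0..n-1 ('I_n)
   (Bourbaki index k+1 corresponds to k here). *)
From HB Require Import structures.
From mathcomp Require Import all_boot all_order all_algebra.
Set Implicit Arguments. Unset Strict Implicit. Unset Printing Implicit Defensive.
Import Order.TTheory GRing.Theory Num.Theory.

(* A positive root alpha_{i,j} (i <= j) is encoded by the pair (i, j). *)
Definition Rplus (n : nat) : {set 'I_n * 'I_n} := [set p : 'I_n * 'I_n | (p.1 <= p.2)%N].

(* coefficient of the simple root alpha_m in alpha_{i,j} *)
Definition coef n (p : 'I_n * 'I_n) (m : 'I_n) : int :=
  ((p.1 <= m)%N && (m <= p.2)%N)%:Z.

(* lambda <= mu iff mu - lambda is a Z_{>=0}-combination of simple roots *)
Definition rle n (p q : 'I_n * 'I_n) : bool :=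
  [forall m, (coef p m <= coef q m)%R].

Definition inR n (v : 'I_n -> int) : bool :=
  [exists p in Rplus n, [forall m, v m == coef p m] || [forall m, v m == (- coef p m)%R]].

Definition antichain n (A : {set 'I_n * 'I_n}) : bool :=
  (A \subset Rplus n) &&
  [forall p in A, forall q in A, (p != q) ==> ~~ rle p q].

Definition Phi n (A : {set 'I_n * 'I_n}) : {set 'I_n * 'I_n} :=
  [set q in Rplus n | [exists p in A, rle p q]].

Definition abelian_ac n (A : {set 'I_n * 'I_n}) : bool :=
  [forall b1 in Phi A, forall b2 in Phi A, ~~ inR (fun m => (coef b1 m + coef b2 m)%R)].

Definition Aset (n s : nat) : {set {set 'I_n * 'I_n}} :=
  [set A | antichain A && abelian_ac A && (#|A| == s)].

From HB Require Import structures.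
From mathcomp Require Import all_boot all_order all_algebra.
From mathcomp Require Import zify.
Set Implicit Arguments. Unset Strict Implicit. Unset Printing Implicit Defensive.

(* Since alpha_{i,j} <= alpha_{k,l} means [i, j] is contained in [k, l], an
   antichain is a family of intervals none containing another; abelianness
   says that no two roots above it sum to a root, which (as alpha_{a,b} +
   alpha_{b+1,c} is a root while overlapping supports give a coefficient 2)
   amounts to: any two supports in the antichain meet.  Sorting by left end
   this is exactly the staircase shape i_1 < ... < i_s <= j_1 < ... < j_s
   (roots_of_abelian, Aset_staircase).

   For counting, a staircase is determined by its set of ends
   {i_1, ..., i_s, j_1, ..., j_s}, which has 2s elements, or 2s - 1 when
   i_s = j_1; conversely every increasing sequence of such a length gives a
   staircase (stair_of).  Hence #A_s = C(n, 2s) + C(n, 2s - 1), and summing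
   over s (with #A_0 = 1) gives sum_(k <= n) C(n, k) = 2^n. *)

Section RootsOfTypeA.
Variable n : nat.
Implicit Types (p q : 'I_n * 'I_n) (v : 'I_n -> int).

Lemma rle_interval p q : (p.1 <= p.2)%N ->
  rle p q = (q.1 <= p.1)%N && (p.2 <= q.2)%N.
Proof.
move=> hp; apply/forallP/andP => [le_pq | [q1p1 p2q2] m].
  have := le_pq p.1; have := le_pq p.2; rewrite /coef !leqnn hp /= !lez_nat.
  by case: (q.1 <= p.2)%N; case: (p.2 <= q.2)%N; case: (q.1 <= p.1)%N;
    case: (p.1 <= q.2)%N.
rewrite /coef lez_nat; case/boolP: ((p.1 <= m)%N && (m <= p.2)%N) => //.
by case/andP=> p1m mp2; rewrite (leq_trans q1p1 p1m) (leq_trans mp2 p2q2).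
Qed.

(* Every coefficient of a root is 0 or 1 up to sign, so a vector with a
   coefficient 2 is not a root. *)
Lemma coef2_not_root v m : v m = Posz 2 -> ~~ inR v.
Proof.
move=> vm; apply/existsP => -[p /andP [_ /orP [] /forallP /(_ m)]];
  by rewrite vm /coef; case: (_ && _).
Qed.

Lemma overlapping_sum_not_root p q (m : 'I_n) :
  (p.1 <= m <= p.2)%N -> (q.1 <= m <= q.2)%N ->
  ~~ inR (fun m => (coef p m + coef q m)%R).
Proof. by move=> mp mq; apply: (@coef2_not_root _ m); rewrite /coef mp mq. Qed.

Lemma adjacent_sum_root (a b b' c : 'I_n) :
  (a <= b)%N -> b' = b.+1 :> nat -> (b' <= c)%N ->
  inR (fun m => (coef (a, b) m + coef (b', c) m)%R).
Proof.
move=> ab eb' b'c; apply/existsP; exists (a, c).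
rewrite inE /=; have -> /= : (a <= c)%N by lia.
apply/orP; left; apply/forallP => m; rewrite /coef /= -PoszD; apply/eqP.
congr Posz; case: (leqP m b) => mb /=; lia.
Qed.

End RootsOfTypeA.

(* The shape of an abelian antichain: i_1 < ... < i_s <= j_1 < ... < j_s.
   The third clause i_k <= j_l for all k, l is equivalent to i_s <= j_1. *)
Definition staircase n s (i j : 'I_s -> 'I_n) : Prop :=
  [/\ forall k l : 'I_s, (k < l)%N -> (i k < i l)%N,
      forall k l : 'I_s, (k < l)%N -> (j k < j l)%N &
      forall k l : 'I_s, (i k <= j l)%N].

Definition roots_of n s (i j : 'I_s -> 'I_n) : {set 'I_n * 'I_n} :=
  [set (i k, j k) | k : 'I_s].

Section StaircaseIsAbelianAntichain.
Variables (n s : nat) (i j : 'I_s -> 'I_n).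
Hypothesis stair : staircase i j.

Let i_mono : forall k l : 'I_s, (k < l)%N -> (i k < i l)%N.
Proof. by case: stair. Qed.
Let j_mono : forall k l : 'I_s, (k < l)%N -> (j k < j l)%N.
Proof. by case: stair. Qed.
Let i_le_j : forall k l : 'I_s, (i k <= j l)%N.
Proof. by case: stair. Qed.

Lemma card_roots_of : #|roots_of i j| = s.
Proof.
rewrite card_imset ?card_ord // => k l /(congr1 fst) /= eq_ikl.
by have [/i_mono | /i_mono | /val_inj //] := ltngtP k l; rewrite eq_ikl ltnn.
Qed.

Lemma roots_of_antichain : antichain (roots_of i j).
Proof.
apply/andP; split.
  by apply/subsetP => p /imsetP [k _ ->]; rewrite inE /= i_le_j.
apply/forallP => p; apply/implyP => /imsetP [k _ ->].
apply/forallP => q; apply/implyP => /imsetP [l _ ->].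
apply/implyP => ne_kl; rewrite rle_interval //= negb_and -!ltnNge.
have [/i_mono -> // | /j_mono -> | /val_inj eq_kl] := ltngtP k l; first exact: orbT.
by rewrite eq_kl eqxx in ne_kl.
Qed.

(* Any two roots above elements of a staircase share the simple root
   alpha_{max(i_k, i_l)}, so no two elements of Phi sum to a root. *)
Lemma roots_of_abelian : abelian_ac (roots_of i j).
Proof.
have above b : b \in Phi (roots_of i j) ->
    exists k : 'I_s, (b.1 <= i k)%N && (j k <= b.2)%N.
  rewrite inE => /andP [_ /existsP [p /andP [/imsetP [k _ ->]]]].
  by rewrite rle_interval //= => le_kb; exists k.
apply/forallP => b1; apply/implyP => /above [k /andP [b1k kb1]].
apply/forallP => b2; apply/implyP => /above [l /andP [b2l lb2]].
have [m [/andP [mk km] /andP [ml lm]]] : exists m : 'I_n,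
    (i k <= m <= j k)%N /\ (i l <= m <= j l)%N.
  case: (leqP (i k) (i l)) => [le_kl | /ltnW le_lk].
    by exists (i l); rewrite !i_le_j le_kl leqnn.
  by exists (i k); rewrite !i_le_j le_lk leqnn.
apply: (@overlapping_sum_not_root _ _ _ m).
  by rewrite (leq_trans b1k mk) (leq_trans km kb1).
by rewrite (leq_trans b2l ml) (leq_trans lm lb2).
Qed.

Lemma staircase_Aset : roots_of i j \in Aset n s.
Proof.
by rewrite inE roots_of_antichain roots_of_abelian card_roots_of eqxx.
Qed.

End StaircaseIsAbelianAntichain.

Lemma enum_ord_sorted n (X : {set 'I_n}) : sorted (relpre val ltn) (enum X).
Proof.
rewrite -sorted_map -[enum _](eq_filter (mem_enum _)).
rewrite -(eq_filter (mem_map val_inj _)) -filter_map.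
by rewrite (sorted_filter ltn_trans) // unlock val_ord_enum iota_ltn_sorted.
Qed.

Section AbelianAntichainIsStaircase.
Variables (n s : nat) (A : {set 'I_n * 'I_n}).
Hypothesis A_s : A \in Aset n s.

Let A_pos p : p \in A -> (p.1 <= p.2)%N.
Proof.
by move: A_s; rewrite !inE => /andP [/andP [/andP [/subsetP sub _] _] _] /sub;
  rewrite inE.
Qed.

Let A_incomparable p q : p \in A -> q \in A -> p != q -> ~~ rle p q.
Proof.
move: A_s; rewrite !inE => /andP [/andP [/andP [_ /forallP nn] _] _] pA qA.
by move: (nn p); rewrite pA /= => /forallP /(_ q); rewrite qA /= => /implyP.
Qed.

(* Supports of elements of A pairwise meet or touch: p.1 <= q.2. Otherwise
   alpha_{q.2+1, p.2} >= p lies in Phi(A) and adds to q to give the root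
   alpha_{q.1, p.2}. *)
Lemma Aset_supports_meet p q : p \in A -> q \in A -> (p.1 <= q.2)%N.
Proof.
move=> pA qA; rewrite leqNgt; apply/negP => q2p1.
have b1_lt : (q.2.+1 < n)%N := leq_ltn_trans q2p1 (ltn_ord _).
pose b := (Ordinal b1_lt, p.2).
have b_pos : (b.1 <= b.2)%N by apply: leq_trans q2p1 (A_pos pA).
have qPhi : q \in Phi A.
  by rewrite !inE A_pos //=; apply/existsP; exists q; rewrite qA rle_interval ?A_pos ?leqnn.
have bPhi : b \in Phi A.
  rewrite !inE b_pos /=; apply/existsP; exists p.
  by rewrite pA rle_interval ?A_pos //= q2p1 leqnn.
move: A_s; rewrite inE => /andP [/andP [_ /forallP /(_ q) abel] _].
move: abel; rewrite qPhi /= => /forallP /(_ b); rewrite bPhi /= => /negP; apply.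
by apply: adjacent_sum_root; rewrite ?A_pos.
Qed.

Lemma Aset_fst_inj : {in A &, injective fst}.
Proof.
move=> p q pA qA eq1; apply/eqP; apply: contraT => ne_pq.
case: (leqP p.2 q.2) => [le2 | lt2].
  by move: (A_incomparable pA qA ne_pq); rewrite rle_interval ?A_pos // eq1 leqnn le2.
by move: (A_incomparable qA pA); rewrite eq_sym ne_pq rle_interval ?A_pos //
  eq1 leqnn (ltnW lt2) => /(_ isT).
Qed.

(* Enumerating the left ends increasingly, and pairing each with the unique
   right end, exhibits A as a staircase. *)
Lemma Aset_staircase (x0 : 'I_n) :
  exists i j : 'I_s -> 'I_n, staircase i j /\ A = roots_of i j.
Proof.
pose u := enum [set p.1 | p in A].
have size_u : size u = s.
  move: A_s; rewrite inE => /andP [_ /eqP <-].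
  by rewrite -cardE card_in_imset //; apply: Aset_fst_inj.
pose i (k : 'I_s) := nth x0 u k.
pose j (k : 'I_s) := odflt x0 [pick y | (i k, y) \in A].
have ijA k : (i k, j k) \in A.
  have : i k \in [set p.1 | p in A] by rewrite -mem_enum mem_nth // size_u.
  case/imsetP => p pA ikp; rewrite /j; case: pickP => [y // | no_y].
  by move: (no_y p.2); rewrite ikp -surjective_pairing pA.
have i_mono (k l : 'I_s) : (k < l)%N -> (i k < i l)%N.
  move=> kl; apply: (sorted_ltn_nth (relpre_trans ltn_trans) x0 (enum_ord_sorted _));
  by rewrite ?inE ?size_u.
have j_mono (k l : 'I_s) : (k < l)%N -> (j k < j l)%N.
  move=> kl; have ne : (i l, j l) != (i k, j k).
    by apply/eqP => /(congr1 fst) /= eq_lk; move: (i_mono _ _ kl); rewrite eq_lk ltnn.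
  move: (A_incomparable (ijA l) (ijA k) ne).
  by rewrite rle_interval ?A_pos //= (ltnW (i_mono _ _ kl)) -ltnNge.
exists i, j; split.
  by split=> // k l; exact: Aset_supports_meet (ijA k) (ijA l).
apply/setP => p; apply/idP/imsetP => [pA | [k _ ->] //].
have : p.1 \in u by rewrite mem_enum imset_f.
rewrite -index_mem size_u => lt_idx; exists (Ordinal lt_idx) => //.
by apply: Aset_fst_inj; rewrite //= /i nth_index // mem_enum imset_f.
Qed.

End AbelianAntichainIsStaircase.

(* The staircase read off an increasing sequence t of length s + d
   (d = s - 1 or d = s): the k-th root has ends t_k and t_(k+d). *)
Definition stair_of n s (x0 : 'I_n) (t : seq 'I_n) : {set 'I_n * 'I_n} :=
  roots_of (fun k : 'I_s => nth x0 t k) (fun k : 'I_s => nth x0 t (k + (size t - s))).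

Section StaircaseOfSequence.
Variables (n s : nat) (x0 : 'I_n) (t : seq 'I_n).
Hypotheses (s_le_t : (s <= size t)%N) (t_le_2s : (size t <= s + s)%N).

Let left_lt (k : 'I_s) : (k < size t)%N.
Proof. by have := ltn_ord k; lia. Qed.

Let right_lt (k : 'I_s) : (k + (size t - s) < size t)%N.
Proof. by have := ltn_ord k; lia. Qed.

Lemma mem_ends_stair_of x :
  (x \in t) = [exists p in stair_of s x0 t, (p.1 == x) || (p.2 == x)].
Proof.
apply/idP/existsP => [x_t | [p /andP [/imsetP [k _ ->]]]]; last first.
  by case/orP => /eqP <-; apply: mem_nth; [exact: left_lt | exact: right_lt].
have idx_lt : (index x t < size t)%N by rewrite index_mem.
have [idx_s | s_idx] := ltnP (index x t) s.
  exists (nth x0 t (Ordinal idx_s), nth x0 t (Ordinal idx_s + (size t - s))).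
  by rewrite imset_f //= nth_index ?eqxx.
have idx_d : (index x t - (size t - s) < s)%N by lia.
exists (nth x0 t (Ordinal idx_d), nth x0 t (Ordinal idx_d + (size t - s))).
by rewrite imset_f //= subnK ?nth_index ?eqxx ?orbT //; lia.
Qed.

Hypothesis t_sorted : sorted (relpre val ltn) t.

Let nth_mono a b : (a < b)%N -> (b < size t)%N -> (nth x0 t a < nth x0 t b)%N.
Proof.
move=> ab bt; apply: (sorted_ltn_nth (relpre_trans ltn_trans) x0 t_sorted);
  by rewrite ?inE //; lia.
Qed.

(* If moreover size t >= 2s - 1, the index functions of stair_of t form a
   staircase (when size t = 2s - 1 the middle term is both i_s and j_1). *)
Lemma stair_of_staircase : (s + s <= (size t).+1)%N ->
  staircase (fun k : 'I_s => nth x0 t k)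
            (fun k : 'I_s => nth x0 t (k + (size t - s))).
Proof.
move=> t_ge; split=> k l; have := ltn_ord k; have := ltn_ord l => lt_l lt_k.
- by move=> kl; apply: nth_mono; lia.
- by move=> kl; apply: nth_mono; lia.
have [kl | kl | -> //] := ltngtP k (l + (size t - s)).
- by apply/ltnW/nth_mono; lia.
- lia.
Qed.

End StaircaseOfSequence.

(* An increasing sequence is determined by its set of terms, hence by its
   staircase. *)
Lemma stair_of_inj n s (x0 : 'I_n) (t1 t2 : seq 'I_n) :
  sorted (relpre val ltn) t1 -> sorted (relpre val ltn) t2 ->
  (s <= size t1 <= s + s)%N -> (s <= size t2 <= s + s)%N ->
  stair_of s x0 t1 = stair_of s x0 t2 -> t1 = t2.
Proof.
move=> t1_sorted t2_sorted /andP [lo1 hi1] /andP [lo2 hi2] eq_stair.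
apply: (irr_sorted_eq (relpre_trans (f := val) ltn_trans)) => // [x | x].
  by rewrite /= ltnn.
by rewrite (mem_ends_stair_of x0 lo1 hi1) (mem_ends_stair_of x0 lo2 hi2) eq_stair.
Qed.

Section SequenceOfStaircase.
Variables (n s' : nat) (x0 : 'I_n) (i j : 'I_s'.+1 -> 'I_n).
Hypothesis stair : staircase i j.

Let ii r := i (inord r).
Let jj r := j (inord r).
Let d := if (i ord_max < j ord0)%N then s'.+1 else s'.

(* The terms i_1 < ... < i_s followed by j_(s-d+1) < ... < j_s, so that the
   shared middle term is listed once when i_s = j_1. *)
Definition stair_seq : seq 'I_n :=
  mkseq (fun r => if (r < s'.+1)%N then ii r else jj (r - d)) (s'.+1 + d).

Let ii_mono a b : (a < b)%N -> (b <= s')%N -> (ii a < ii b)%N.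
Proof. by case: stair => i_mono _ _ ab bs; apply: i_mono; rewrite !inordK; lia. Qed.

Let jj_mono a b : (a < b)%N -> (b <= s')%N -> (jj a < jj b)%N.
Proof. by case: stair => _ j_mono _ ab bs; apply: j_mono; rewrite !inordK; lia. Qed.

Let i_max_le_j0 : (i ord_max <= j ord0)%N.
Proof. by case: stair. Qed.

Let ii_val (k : 'I_s'.+1) : ii k = i k.
Proof. by rewrite /ii inord_val. Qed.

Let jj_val (k : 'I_s'.+1) : jj k = j k.
Proof. by rewrite /jj inord_val. Qed.

Let ii_max : ii s' = i ord_max.
Proof. by rewrite /ii; congr i; apply: val_inj; rewrite /= inordK. Qed.

Let jj_0 : jj 0 = j ord0.
Proof. by rewrite /jj; congr j; apply: val_inj; rewrite /= inordK. Qed.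

Lemma size_stair_seq : size stair_seq = s'.+1.*2 \/ size stair_seq = s'.+1.*2.-1.
Proof. by rewrite size_mkseq /d; case: ifP => _; [left | right]; lia. Qed.

(* Consecutive terms increase: inside each half by monotonicity of i and j,
   and across the junction since i_s < j_1, resp. i_s = j_1 < j_2. *)
Lemma stair_seq_sorted : sorted (relpre val ltn) stair_seq.
Proof.
apply/(sortedP x0) => r; rewrite size_mkseq => r_lt.
rewrite !nth_mkseq /=; try lia.
case: (ltnP r.+1 s'.+1) => [lt_r1 | ge_r1]; first by rewrite (ltnW lt_r1) ii_mono.
case: (ltnP r s'.+1) => [lt_r | ge_r]; last first.
  by apply: jj_mono; move: r_lt; rewrite /d; case: ifP; lia.
have r_eq : r = s' by lia.
rewrite r_eq ii_max /d; case: ifP => [lt_ij | ge_ij]; first by rewrite subnn jj_0.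
have s'_gt0 : (0 < s')%N by move: r_lt; rewrite /d ge_ij; lia.
have -> : (s'.+1 - s' = 1)%N by lia.
by apply: leq_ltn_trans i_max_le_j0 _; rewrite -jj_0 jj_mono.
Qed.

Lemma stair_of_stair_seq : stair_of s'.+1 x0 stair_seq = roots_of i j.
Proof.
rewrite /stair_of size_mkseq addKn; apply: eq_imset => k /=.
have lt_k := ltn_ord k.
rewrite !nth_mkseq; [| by rewrite /d; case: ifP; lia | lia].
rewrite lt_k ii_val; congr pair.
case: (ltnP (k + d) s'.+1) => [lt_kd | ge_kd]; last by rewrite addnK jj_val.
have d_eq : d = s' by move: lt_kd; rewrite /d; case: ifP; lia.
have k0 : k = ord0 by apply: val_inj => /=; lia.
rewrite k0 add0n d_eq ii_max; apply/val_inj/eqP; rewrite /= eqn_leq i_max_le_j0.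
by rewrite leqNgt; apply/negP => lt_ij; move: d_eq; rewrite /d lt_ij; lia.
Qed.

End SequenceOfStaircase.

Lemma staircase_stair_of n s (x0 : 'I_n) (i j : 'I_s -> 'I_n) :
  (0 < s)%N -> staircase i j ->
  exists t : seq 'I_n, [/\ sorted (relpre val ltn) t,
    size t = s.*2 \/ size t = s.*2.-1 & roots_of i j = stair_of s x0 t].
Proof.
case: s i j => // s' i j _ stair; exists (stair_seq i j).
split; first exact: (stair_seq_sorted x0 stair).
  exact: size_stair_seq.
by rewrite (stair_of_stair_seq x0 stair).
Qed.

Section CountingAbelianAntichains.
Variables (n s : nat) (x0 : 'I_n).
Hypothesis s_gt0 : (0 < s)%N.

Let incr m := [set t : m.-tuple 'I_n | sorted ltn (map val t)].
Let stair {m} (t : m.-tuple 'I_n) := stair_of s x0 t.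

Let incr_sorted m (t : m.-tuple 'I_n) : t \in incr m -> sorted (relpre val ltn) t.
Proof. by rewrite inE sorted_map. Qed.

Let size_ok m (t : m.-tuple 'I_n) :
  m = s.*2 \/ m = s.*2.-1 -> (s <= size t <= s + s)%N.
Proof. by rewrite size_tuple; case=> ->; apply/andP; split; lia. Qed.

Lemma Aset_stairs : Aset n s = stair @: incr s.*2 :|: stair @: incr s.*2.-1.
Proof.
apply/setP => A; apply/idP/idP => [A_s | ].
  have [i [j [stair_ij ->]]] := Aset_staircase A_s x0.
  have [t [t_sorted [t_size | t_size] ->]] := staircase_stair_of x0 s_gt0 stair_ij.
  - apply/setUP; left; apply/imsetP; exists (Tuple (introT eqP t_size)) => //.
    by rewrite inE sorted_map.
  - apply/setUP; right; apply/imsetP; exists (Tuple (introT eqP t_size)) => //.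
    by rewrite inE sorted_map.
case/setUP => /imsetP [t t_incr ->]; apply: staircase_Aset;
  apply: stair_of_staircase (incr_sorted t_incr) _; rewrite size_tuple; lia.
Qed.

Let stair_inj m : m = s.*2 \/ m = s.*2.-1 -> {in incr m &, injective (@stair m)}.
Proof.
move=> m_ok t1 t2 t1_incr t2_incr eq_stair; apply: val_inj.
exact: stair_of_inj (incr_sorted t1_incr) (incr_sorted t2_incr)
  (size_ok t1 m_ok) (size_ok t2 m_ok) eq_stair.
Qed.

(* Sequences of different lengths give different staircases, so the union
   is disjoint and each part is counted by binomial coefficients. *)
Lemma Aset_card : #|Aset n s| = ('C(n, s.*2) + 'C(n, s.*2.-1))%N.
Proof.
have disjoint : stair @: incr s.*2 :&: stair @: incr s.*2.-1 = set0.
  apply/setP => A; rewrite !inE; apply/negP.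
  case/andP => /imsetP [t1 t1_incr ->] /imsetP [t2 t2_incr eq_stair].
  have /(congr1 size) := stair_of_inj (incr_sorted t1_incr) (incr_sorted t2_incr)
    (size_ok t1 (or_introl erefl)) (size_ok t2 (or_intror erefl)) eq_stair.
  rewrite !size_tuple; lia.
rewrite Aset_stairs cardsU disjoint cards0 subn0.
rewrite !card_in_imset ?card_ltn_sorted_tuples //; apply: stair_inj; by [left | right].
Qed.

End CountingAbelianAntichains.

Lemma card_Aset0 n (x0 : 'I_n) : #|Aset n 0| = 1%N.
Proof.
apply/eqP/cards1P; exists set0; apply/setP => A; rewrite in_set1.
apply/idP/eqP => [| ->]; first by rewrite inE => /andP [_ /eqP /cards0_eq].
have -> : set0 = roots_of (fun _ : 'I_0 => x0) (fun _ => x0).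
  by apply/setP => p; rewrite inE; apply/esym/imsetP => -[[]].
by apply: staircase_Aset; split; case.
Qed.

Lemma sum_bin_pairs n N :
  (1 + \sum_(s < N) ('C(n, s.+1.*2) + 'C(n, s.+1.*2.-1)) =
   \sum_(k < N.*2.+1) 'C(n, k))%N.
Proof.
elim: N => [|N IH]; first by rewrite big_ord0 big_ord1 bin0.
rewrite big_ord_recr /= addnA IH doubleS [RHS]big_ord_recr /= [in RHS]big_ord_recr /=.
by rewrite -addnA [('C(n, _) + _)%N]addnC.
Qed.

(* The binomial theorem at a = b = 1, with the sum truncated anywhere past n. *)
Lemma sum_bin_exp2 n M : (n < M)%N -> (\sum_(k < M) 'C(n, k) = 2 ^ n)%N.
Proof.
move=> nM; have -> : (2 ^ n = \sum_(k < n.+1) 'C(n, k))%N.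
  by rewrite -[2]/(1 + 1)%N expnDn; apply: eq_bigr => k _; rewrite !exp1n !muln1.
rewrite (big_ord_widen _ (fun k => 'C(n, k)) nM) [RHS]big_mkcond /=.
by apply: eq_bigr => k _; case: ltnP => // /bin_small.
Qed.

Theorem mainTheorem6 (n : nat) (hn : (0 < n)%N) :
  (forall s : nat, (0 < s)%N ->
     forall A : {set 'I_n * 'I_n},
       A \in Aset n s <->
       exists (i j : 'I_s -> 'I_n),
         (forall k l : 'I_s, (k < l)%N -> (i k < i l)%N) /\
         (forall k l : 'I_s, (k < l)%N -> (j k < j l)%N) /\
         (forall k l : 'I_s, (i k <= j l)%N) /\
         A = [set (i k, j k) | k : 'I_s]) /\
  (forall s : nat, (0 < s)%N ->
     #|Aset n s| = ('C(n, s.*2) + 'C(n, s.*2.-1))%N) /\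
  (\sum_(s < (n * n).+1) #|Aset n s| = 2 ^ n)%N.
Proof.
pose x0 := Ordinal hn.
split; [| split; first by move=> s; apply: Aset_card x0].
  move=> s _ A; split.
    by move/Aset_staircase => /(_ x0) [i [j [[i_mono j_mono i_le_j] ->]]]; exists i, j.
  by case=> i [j [i_mono [j_mono [i_le_j ->]]]]; apply: staircase_Aset.
rewrite big_ord_recl (card_Aset0 x0).
under eq_bigr => s _ do rewrite lift0 (Aset_card x0 (ltn0Sn s)).
by rewrite sum_bin_pairs sum_bin_exp2 //; nia.
Qed.
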